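(* Let $j>0$ and $a_0,\dots,a_j\in\mathbb{Z}$, and let $p(t)=a_0+a_1t+\cdots+a_jt^j$. Suppose there is an integer polynomial $q(t)=b_0+b_1t+\cdots+b_\ell t^\ell$ with $p(t)\,q(t)=1-t^{j+\ell}$. For each integer $n\ge j+1$ let $G_n$ be the abelian group with generators $x_i$, $i\in\mathbb{Z}/n\mathbb{Z}$, and relations $a_0x_i+a_1x_{i+1}+\cdots+a_jx_{i+j}=0$ for every $i\in\mathbb{Z}/n\mathbb{Z}$. Then $G_n\cong G_{n+j+\ell}$ for every $n\ge j+1$. *)

From HB Require Import structures.
From mathcomp Require Import all_boot all_order all_algebra.
Set Implicit Arguments. Unset Strict Implicit. Unset Printing Implicit Defensive.
Import Order.TTheory GRing.Theory Num.Theory.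
Local Open Scope ring_scope.

(* Relation matrix of G_n: row i (i in Z/nZ, represented by 'I_n) is the
   coefficient vector of the relation  a_0 x_i + a_1 x_{i+1} + ... + a_j x_{i+j},
   indices taken mod n. *)
Definition relmx (j : nat) (a : nat -> int) (n : nat) : 'M[int]_n :=
  \matrix_(i < n, k < n) \sum_(t < j.+1 | ((i + t) %% n)%N == k) a t.

(* u (an element of the free abelian group Z^n on x_0..x_{n-1}) lies in the
   subgroup generated by the relations, i.e. u = 0 in G_n. *)
Arguments relmx : clear implicits.
Definition inrel (j : nat) (a : nat -> int) (n : nat) (u : 'rV[int]_n) : Prop :=
  exists w : 'rV[int]_n, u = w *m relmx j a n.

Arguments inrel : clear implicits.
(* G_n = Z^n / <relations>.  An isomorphism G_n -> G_m is given by a group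
   homomorphism phi : Z^n -> Z^m (every hom out of G_n lifts to the free group)
   which maps the relation subgroup into the relation subgroup (well defined),
   whose induced map is injective, and whose induced map is surjective. *)
Definition G_iso (j : nat) (a : nat -> int) (n m : nat) : Prop :=
  exists phi : 'rV[int]_n -> 'rV[int]_m,
    {morph phi : x y / x + y} /\
    (forall u, inrel j a n u <-> inrel j a m (phi u)) /\
    (forall y, exists x, inrel j a m (phi x - y)).

From HB Require Import structures.
From mathcomp Require Import all_boot all_order all_algebra.
From mathcomp Require Import ring.
Import GRing.Theory Pdiv.CommonRing Pdiv.RingMonic.
Local Open Scope ring_scope.
Set Implicit Arguments. Unset Strict Implicit.

(* Identify the free abelian group Z^m on x_0, ..., x_(m-1)
   with the quotient ring Z[t]/(t^m - 1), x_i corresponding to t^i: a row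
   vector u is sent to the polynomial rVpoly u, and a polynomial f is sent
   back to the coefficient row of its remainder modulo the monic polynomial
   t^m - 1 (the "cyclic reduction" cyc_red f).  Under this identification the
   relation (a_0, ..., a_j) at index i is the class of t^i p, so the relation
   subgroup of G_m is the image of the ideal (p, t^m - 1) of Z[t], and
   G_m = Z[t]/(p, t^m - 1).  If p q = 1 - t^s then t^s = 1 modulo p, hence
   t^(n+s) - 1 = t^n - 1 modulo p and the ideals (p, t^n - 1) and
   (p, t^(n+s) - 1) coincide.  The isomorphism G_n -> G_(n+s) is thus induced
   by the identity of Z[t], i.e. by u |-> cyc_red (rVpoly u). *)

Definition rel_ideal (m : nat) (p f : {poly int}) : Prop :=
  exists c h, f = c * p + h * ('X^m - 1).

Section CyclicReduction.

Variable m : nat.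
Hypothesis m_gt0 : (0 < m)%N.

(* t^m - 1 is monic of degree m, so division by it is exact over Z. *)
Lemma monic_cyc : ('X^m - 1 : {poly int}) \is monic.
Proof. by have := monicXnsubC (1 : int) m_gt0; rewrite polyC1. Qed.

Lemma size_cyc : size ('X^m - 1 : {poly int}) = m.+1.
Proof. by have := size_XnsubC (1 : int) m_gt0; rewrite polyC1. Qed.

Definition cyc_red (f : {poly int}) : 'rV[int]_m :=
  poly_rV (rmodp f ('X^m - 1)).

Lemma cyc_red_is_semilinear : semilinear cyc_red.
Proof.
split=> [c f | f g]; rewrite /cyc_red ?rmodpZ ?rmodpD ?monic_cyc //.
  exact: linearZ.
exact: raddfD.
Qed.

HB.instance Definition _ := GRing.isSemilinear.Build int {poly int} 'rV[int]_m _
  cyc_red cyc_red_is_semilinear.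

Lemma cyc_red_mull (g : {poly int}) : cyc_red (g * ('X^m - 1)) = 0.
Proof. by rewrite /cyc_red rmodp_mull ?monic_cyc // linear0. Qed.

Lemma cyc_red_rVpoly (u : 'rV[int]_m) : cyc_red (rVpoly u) = u.
Proof.
rewrite /cyc_red rmodp_small ?rVpolyK // size_cyc ltnS.
by rewrite size_poly.
Qed.

Lemma cyc_red_lift (f : {poly int}) :
  exists g, f = rVpoly (cyc_red f) + g * ('X^m - 1).
Proof.
exists (rdivp f ('X^m - 1)); rewrite addrC /cyc_red poly_rV_K.
  exact: rdivp_eq monic_cyc _.
by rewrite -ltnS -size_cyc ltn_rmodp -size_poly_eq0 size_cyc.
Qed.

Lemma cyc_red_eq0 (f : {poly int}) :
  cyc_red f = 0 <-> exists g, f = g * ('X^m - 1).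
Proof.
split=> [f0 | [g ->]]; last exact: cyc_red_mull.
by have [g f_g] := cyc_red_lift f; exists g; rewrite f_g f0 raddf0 add0r.
Qed.

Lemma cyc_red_Xn (e : nat) :
  cyc_red 'X^e = delta_mx 0 (Ordinal (ltn_pmod e m_gt0)).
Proof.
have t_m_multiple : 'X^(e %/ m * m) - 1 =
    \sum_(i < e %/ m) 'X^(m * i) * ('X^m - 1) :> {poly int}.
  rewrite -mulr_suml mulrC mulnC exprM subrX1; congr (_ * _).
  by apply: eq_bigr => i _; rewrite exprM.
rewrite {1}(divn_eq e m) exprD -[X in X * _](subrK 1) mulrDl mul1r.
rewrite raddfD /= t_m_multiple mulr_suml raddf_sum /= big1 ?add0r.
  by rewrite -(@rVpoly_delta _ m (Ordinal (ltn_pmod e m_gt0))) cyc_red_rVpoly.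
by move=> i _; rewrite mulrAC cyc_red_mull.
Qed.

End CyclicReduction.

Section RelationMatrix.

Variables (j : nat) (a : nat -> int) (m : nat).
Hypothesis m_gt0 : (0 < m)%N.
Let p : {poly int} := \poly_(t < j.+1) a t.

Lemma relmx_row (i : 'I_m) :
  row i (relmx j a m) = cyc_red m ('X^i * p).
Proof.
rewrite /p poly_def mulr_sumr raddf_sum /=; apply/rowP => k.
rewrite !mxE summxE [LHS]big_mkcond /=; apply: eq_bigr => t _.
rewrite -scalerAr linearZ /= -exprD (cyc_red_Xn m_gt0) !mxE /=.
rewrite eq_sym -val_eqE /=.
by case: ifP => _; rewrite ?mulr1 ?mulr0.
Qed.

Lemma cyc_red_mulp (f : {poly int}) :
  cyc_red m (f * p) = cyc_red m f *m relmx j a m.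
Proof.
have [g ->] := cyc_red_lift m_gt0 f.
rewrite mulrDl mulrAC !raddfD /= !cyc_red_mull // !addr0 cyc_red_rVpoly //.
rewrite mulmx_sum_row [X in rVpoly X]row_sum_delta !raddf_sum mulr_suml.
rewrite raddf_sum; apply: eq_bigr => i _ /=.
rewrite [rVpoly _]linearZ /= rVpoly_delta -scalerAl.
by rewrite [cyc_red m _]linearZ /= relmx_row.
Qed.

Lemma inrel_cyc_red (f : {poly int}) :
  inrel j a m (cyc_red m f) <-> rel_ideal m p f.
Proof.
split=> [[w f_rel] | [c [h ->]]].
  have : cyc_red m (f - rVpoly w * p) = 0.
    by rewrite raddfB /= cyc_red_mulp cyc_red_rVpoly // f_rel subrr.
  case/(cyc_red_eq0 m_gt0) => h f_h; exists (rVpoly w), h.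
  by rewrite -f_h addrC subrK.
exists (cyc_red m c).
by rewrite raddfD /= cyc_red_mull // addr0 cyc_red_mulp.
Qed.

End RelationMatrix.

(* If p q = 1 - t^s, the ideals (p, t^n - 1) and (p, t^(n+s) - 1) coincide,
   since t^(n+s) - 1 = (t^n - 1) - t^n q p. *)
Lemma rel_ideal_shift (n s : nat) (p q f : {poly int}) :
  p * q = 1 - 'X^s -> rel_ideal n p f <-> rel_ideal (n + s) p f.
Proof.
move=> pq; have Xs : 'X^s = 1 - p * q by rewrite pq; ring.
split=> [[c [h ->]] | [c [h ->]]].
  by exists (c + h * 'X^n * q), h; rewrite exprD Xs; ring.
by exists (c - h * 'X^n * q), h; rewrite exprD Xs; ring.
Qed.

Theorem theorem5p5 (j l : nat) (a b : nat -> int) (hj : (0 < j)%N)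
  (hpq : (\poly_(i < j.+1) a i) * (\poly_(i < l.+1) b i) = 1 - 'X^(j + l))
  (n : nat) (hn : (j.+1 <= n)%N) :
  G_iso j a n (n + j + l).
Proof.
have n_gt0 : (0 < n)%N by apply: leq_trans hn.
have N_gt0 : (0 < n + j + l)%N by rewrite -addnA ltn_addr.
have same_ideal f : rel_ideal n (\poly_(i < j.+1) a i) f <->
                    rel_ideal (n + j + l) (\poly_(i < j.+1) a i) f.
  by rewrite -addnA; apply: rel_ideal_shift hpq.
exists (fun u => cyc_red (n + j + l) (rVpoly u)); split; last split.
- by move=> x y; rewrite !raddfD.
- by move=> u; rewrite -{1}(cyc_red_rVpoly n_gt0 u) !inrel_cyc_red.
- move=> y; set x := cyc_red n (rVpoly y); exists x.
  rewrite -{1}(cyc_red_rVpoly N_gt0 y) -raddfB inrel_cyc_red //.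
  apply/same_ideal.
  have : cyc_red n (rVpoly x - rVpoly y) = 0.
    by rewrite raddfB /= cyc_red_rVpoly // subrr.
  by case/(cyc_red_eq0 n_gt0) => g ->; exists 0, g; rewrite mul0r add0r.
Qed.
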